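(* Let $G$ be a regular subsequential method of sequential convergence, and let $f:\mathbb{R}\to\mathbb{R}$ be Abel continuous. Then $f$ is $G$-continuous.
   Context: Let $s$ denote the space of all real sequences and $c$ the space of convergent real sequences. A method of sequential convergence is a linear function $G$ defined on a linear subspace $c_G$ of $s$ with values in $\mathbb{R}$; a sequence $\mathbf{p}$ is $G$-convergent to $\ell$ if $\mathbf{p}\in c_G$ and $G(\mathbf{p})=\ell$. $G$ is regular if every convergent sequence $\mathbf{p}$ belongs to $c_G$ and $G(\mathbf{p})=\lim\mathbf{p}$. $G$ is subsequential if whenever $G(\mathbf{p})=\ell$ there is a subsequence $(p_{n_k})$ of $\mathbf{p}$ with $\lim_k p_{n_k}=\ell$. $f$ is $G$-continuous if for every $G$-convergent sequence $\mathbf{p}=(p_n)$, the sequence $f(\mathbf{p})=(f(p_n))$ is $G$-convergent and $G(f(\mathbf{p}))=f(G(\mathbf{p}))$. A sequence $(p_n)$ is Abel convergent to $\ell$ if $\sum_{k=0}^{\infty}p_k x^k$ converges for every $0\le x<1$ and $\lim_{x\to1^-}(1-x)\sum_{k=0}^\infty p_kx^k=\ell$; $f$ is Abel continuous if $(f(p_n))$ is Abel convergent to $f(\ell)$ whenever $(p_n)$ is Abel convergent to $\ell$. *)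

From Stdlib Require Import Reals.
From Coquelicot Require Import Coquelicot.
Open Scope R_scope.

(* A method of sequential convergence: a linear subspace cG of the space of
   real sequences (given as a predicate) and a linear functional G on it. *)
Definition is_method (cG : (nat -> R) -> Prop) (G : (nat -> R) -> R) : Prop :=
  cG (fun _ => 0) /\
  (forall p q, cG p -> cG q -> cG (fun n => p n + q n)) /\
  (forall (a : R) p, cG p -> cG (fun n => a * p n)) /\
  (forall p q, cG p -> cG q -> G (fun n => p n + q n) = G p + G q) /\
  (forall (a : R) p, cG p -> G (fun n => a * p n) = a * G p).

Definition G_convergent (cG : (nat -> R) -> Prop) (G : (nat -> R) -> R)
  (p : nat -> R) (l : R) : Prop := cG p /\ G p = l.

Definition regular (cG : (nat -> R) -> Prop) (G : (nat -> R) -> R) : Prop :=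
  forall (p : nat -> R) (l : R), is_lim_seq p (Finite l) -> G_convergent cG G p l.

Definition subsequential (cG : (nat -> R) -> Prop) (G : (nat -> R) -> R) : Prop :=
  forall (p : nat -> R) (l : R), G_convergent cG G p l ->
    exists phi : nat -> nat, (forall k, (phi k < phi (S k))%nat) /\
      is_lim_seq (fun k => p (phi k)) (Finite l).

Definition G_continuous (cG : (nat -> R) -> Prop) (G : (nat -> R) -> R)
  (f : R -> R) : Prop :=
  forall p : nat -> R, cG p ->
    G_convergent cG G (fun n => f (p n)) (f (G p)).

Definition Abel_convergent (p : nat -> R) (l : R) : Prop :=
  (forall x : R, 0 <= x < 1 -> ex_series (fun k => p k * x ^ k)) /\
  filterlim (fun x => (1 - x) * Series (fun k => p k * x ^ k))
            (at_left 1) (locally l).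

Definition Abel_continuous (f : R -> R) : Prop :=
  forall (p : nat -> R) (l : R), Abel_convergent p l ->
    Abel_convergent (fun n => f (p n)) (f l).

(* Abel continuity forces [f] to be affine.  Feeding [f] the Abel-convergent
   sequence [a + b (-1)^n] yields Jensen's equation, so [f] is affine up to an
   additive [h] with [h 1 = 0].  If [h x <> 0], additivity produces numbers
   [t_k] with [|t_k| <= 2^-k] but [h t_k = -4^k h x]; the sequence [t_k] is
   Abel convergent to [0], so [sum f(t_k) 4^-k] must converge, whereas its
   terms tend to [-h x].  An affine map is G-continuous for every regular
   linear method. *)

From Stdlib Require Import Reals Lra FunctionalExtensionality.
From Coquelicot Require Import Coquelicot.
Open Scope R_scope.

Lemma at_left_1_lim_of_bound (F : R -> R) (L K : R) :
  (forall x, 0 < x < 1 -> Rabs (F x - L) <= K * (1 - x)) ->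
  filterlim F (at_left 1) (locally L).
Proof.
  intros HF.
  apply filterlim_locally; intro eps.
  pose proof (Rabs_pos K) as HK.
  assert (Hd : 0 < Rmin 1 (eps / (Rabs K + 1))).
  { apply Rmin_pos; [lra|]. apply Rdiv_lt_0_compat; [apply cond_pos | lra]. }
  exists (mkposreal _ Hd). intros y Hy Hylt.
  change (Rabs (y - 1) < Rmin 1 (eps / (Rabs K + 1))) in Hy.
  change (Rabs (F y - L) < eps).
  pose proof (Rmin_l 1 (eps / (Rabs K + 1))) as H1.
  pose proof (Rmin_r 1 (eps / (Rabs K + 1))) as H2.
  set (d := Rmin 1 (eps / (Rabs K + 1))) in *.
  rewrite Rabs_left in Hy by lra.
  pose proof (HF y ltac:(lra)) as Hb.
  assert (K * (1 - y) <= Rabs K * (1 - y)).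
  { apply Rmult_le_compat_r; [lra | apply Rle_abs]. }
  assert (Rabs K * (1 - y) <= Rabs K * d) by (apply Rmult_le_compat_l; lra).
  assert ((Rabs K + 1) * d <= eps).
  { apply Rle_trans with ((Rabs K + 1) * (eps / (Rabs K + 1))).
    - apply Rmult_le_compat_l; lra.
    - right; field; lra. }
  nra.
Qed.

Lemma Abel_convergent_unique (p : nat -> R) (l1 l2 : R) :
  Abel_convergent p l1 -> Abel_convergent p l2 -> l1 = l2.
Proof.
  intros [_ H1] [_ H2].
  exact (filterlim_locally_unique (F := at_left 1) _ l1 l2 H1 H2).
Qed.

Lemma Abel_convergent_alternating (A B : R) :
  Abel_convergent (fun k => A + B * (-1) ^ k) A.
Proof.
  assert (HS : forall x, 0 <= x < 1 ->
    is_series (fun k => (A + B * (-1) ^ k) * x ^ k) (A / (1 - x) + B / (1 + x))).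
  { intros x Hx.
    assert (H1 : is_series (fun k => x ^ k) (/ (1 - x))).
    { apply is_series_geom. rewrite Rabs_pos_eq; lra. }
    assert (H2 : is_series (fun k => (- x) ^ k) (/ (1 - - x))).
    { apply is_series_geom. rewrite Rabs_Ropp, Rabs_pos_eq; lra. }
    pose proof (is_series_plus _ _ _ _
                  (is_series_scal A _ _ H1) (is_series_scal B _ _ H2)) as H.
    replace (A / (1 - x) + B / (1 + x))
      with (plus (scal A (/ (1 - x))) (scal B (/ (1 - - x)))).
    2:{ change (A * / (1 - x) + B * / (1 - - x) = A / (1 - x) + B / (1 + x)).
        unfold Rdiv. replace (1 - - x) with (1 + x) by ring. reflexivity. }
    apply is_series_ext with (2 := H). intro n.
    change (A * x ^ n + B * (- x) ^ n = (A + B * (-1) ^ n) * x ^ n).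
    replace (- x) with (-1 * x) by ring. rewrite Rpow_mult_distr. ring. }
  split.
  - intros x Hx. eexists. exact (HS x Hx).
  - apply at_left_1_lim_of_bound with (K := Rabs B).
    intros x Hx.
    rewrite (is_series_unique _ _ (HS x ltac:(lra))).
    replace ((1 - x) * (A / (1 - x) + B / (1 + x)) - A)
      with (B * ((1 - x) / (1 + x))) by (field; lra).
    rewrite Rabs_mult. apply Rmult_le_compat_l; [apply Rabs_pos|].
    rewrite Rabs_pos_eq by (apply Rdiv_le_0_compat; lra).
    apply Rmult_le_reg_r with (1 + x); [lra|].
    unfold Rdiv. rewrite Rmult_assoc, Rinv_l by lra. nra.
Qed.

Lemma Abel_convergent_geom_dominated (p : nat -> R) :
  (forall k, Rabs (p k) <= (/ 2) ^ k) -> Abel_convergent p 0.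
Proof.
  intros Hp.
  assert (Hg : is_series (fun k => (/ 2) ^ k) 2).
  { assert (H : is_series (fun k => (/ 2) ^ k) (/ (1 - / 2))).
    { apply is_series_geom. rewrite Rabs_pos_eq; lra. }
    replace (/ (1 - / 2)) with 2 in H by field. exact H. }
  assert (Hb : forall x, 0 <= x < 1 -> forall k, Rabs (p k * x ^ k) <= (/ 2) ^ k).
  { intros x Hx k. rewrite Rabs_mult, <- RPow_abs.
    rewrite <- (Rmult_1_r ((/ 2) ^ k)).
    apply Rmult_le_compat; try apply Rabs_pos.
    - apply pow_le, Rabs_pos.
    - apply Hp.
    - rewrite <- (pow1 k). apply pow_incr. rewrite Rabs_pos_eq; lra. }
  assert (Habs : forall x, 0 <= x < 1 -> ex_series (fun k => Rabs (p k * x ^ k))).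
  { intros x Hx.
    apply (@ex_series_le R_AbsRing R_CompleteNormedModule)
      with (b := fun k => (/ 2) ^ k); [|eexists; exact Hg].
    intro n. change (Rabs (Rabs (p n * x ^ n)) <= (/ 2) ^ n).
    rewrite Rabs_Rabsolu. exact (Hb x Hx n). }
  split.
  - intros x Hx. exact (ex_series_Rabs _ (Habs x Hx)).
  - apply at_left_1_lim_of_bound with (K := 2).
    intros x Hx. rewrite Rminus_0_r, Rabs_mult, Rabs_pos_eq by lra.
    rewrite Rmult_comm. apply Rmult_le_compat_r; [lra|].
    eapply Rle_trans; [apply Series_Rabs, Habs; lra|].
    rewrite <- (is_series_unique _ _ Hg).
    apply Series_le; [|eexists; exact Hg].
    intro n. split; [apply Rabs_pos | apply Hb; lra].
Qed.

Lemma pow_minus_one_cases (k : nat) : (-1) ^ k = 1 \/ (-1) ^ k = -1.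
Proof.
  induction k as [|k IH]; simpl; [left; ring|].
  destruct IH as [H | H]; rewrite H; [right | left]; ring.
Qed.

Lemma Abel_continuous_Jensen (f : R -> R) :
  Abel_continuous f -> forall a b, f (a + b) + f (a - b) = 2 * f a.
Proof.
  intros Hf a b.
  pose proof (Hf _ _ (Abel_convergent_alternating a b)) as H.
  set (C := (f (a + b) + f (a - b)) / 2).
  set (D := (f (a + b) - f (a - b)) / 2).
  assert (E : (fun n => f (a + b * (-1) ^ n)) = (fun k => C + D * (-1) ^ k)).
  { apply functional_extensionality; intro k. unfold C, D.
    destruct (pow_minus_one_cases k) as [e | e]; rewrite e.
    - replace (a + b * 1) with (a + b) by ring. field.
    - replace (a + b * -1) with (a - b) by ring. field. }
  change (Abel_convergent (fun n => f (a + b * (-1) ^ n)) (f a)) in H.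
  rewrite E in H.
  pose proof (Abel_convergent_unique _ _ _ H (Abel_convergent_alternating C D)).
  unfold C in *. lra.
Qed.

Lemma Jensen_affine_defect_additive (f : R -> R) :
  (forall a b, f (a + b) + f (a - b) = 2 * f a) ->
  let h := fun x => f x - f 0 - (f 1 - f 0) * x in
  forall u v, h (u + v) = h u + h v.
Proof.
  intros J h u v. unfold h.
  pose proof (J ((u + v) / 2) ((u - v) / 2)) as J1.
  pose proof (J ((u + v) / 2) ((u + v) / 2)) as J2.
  replace ((u + v) / 2 + (u - v) / 2) with u in J1 by field.
  replace ((u + v) / 2 - (u - v) / 2) with v in J1 by field.
  replace ((u + v) / 2 + (u + v) / 2) with (u + v) in J2 by field.
  replace ((u + v) / 2 - (u + v) / 2) with 0 in J2 by field.
  lra.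
Qed.

(* [2^k * dyadic_witness x k] is an integer minus [8^k x], lying in [(0, 1]]. *)
Definition dyadic_witness (x : R) (k : nat) : R :=
  (IZR (up (8 ^ k * x)) - 8 ^ k * x) / 2 ^ k.

Lemma dyadic_witness_bound (x : R) (k : nat) :
  Rabs (dyadic_witness x k) <= (/ 2) ^ k.
Proof.
  unfold dyadic_witness. destruct (archimed (8 ^ k * x)) as [a1 a2].
  assert (P : 0 < 2 ^ k) by (apply pow_lt; lra).
  unfold Rdiv. rewrite Rabs_mult, Rabs_pos_eq by lra.
  rewrite Rabs_pos_eq by (apply Rlt_le, Rinv_0_lt_compat, P).
  rewrite pow_inv. rewrite <- (Rmult_1_l (/ 2 ^ k)) at 2.
  apply Rmult_le_compat_r; [left; apply Rinv_0_lt_compat, P | lra].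
Qed.

Section Additive.

Variable h : R -> R.
Hypothesis h_add : forall u v, h (u + v) = h u + h v.

Lemma additive_0 : h 0 = 0.
Proof. pose proof (h_add 0 0) as E. rewrite Rplus_0_r in E. lra. Qed.

Lemma additive_opp (x : R) : h (- x) = - h x.
Proof.
  pose proof (h_add x (- x)) as E. rewrite Rplus_opp_r, additive_0 in E. lra.
Qed.

Lemma additive_INR_mult (n : nat) (x : R) : h (INR n * x) = INR n * h x.
Proof.
  induction n as [|n IH].
  - simpl. rewrite Rmult_0_l, additive_0. ring.
  - rewrite S_INR, Rmult_plus_distr_r, Rmult_1_l, h_add, IH. ring.
Qed.

Hypothesis h_1 : h 1 = 0.

Lemma additive_IZR (z : Z) : h (IZR z) = 0.
Proof.
  assert (Hpos : forall q, h (IZR (Z.pos q)) = 0).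
  { intro q. change (IZR (Z.pos q)) with (IPR q). rewrite <- INR_IPR.
    rewrite <- (Rmult_1_r (INR _)), additive_INR_mult, h_1. ring. }
  destruct z as [|q|q].
  - exact additive_0.
  - apply Hpos.
  - rewrite IZR_NEG, additive_opp, Hpos. ring.
Qed.

Lemma additive_dyadic_witness (x : R) (k : nat) :
  h (dyadic_witness x k) = - 4 ^ k * h x.
Proof.
  assert (P : 0 < 2 ^ k) by (apply pow_lt; lra).
  assert (Hpow : forall (m : nat) y, h (INR m ^ k * y) = INR m ^ k * h y).
  { intros m y. rewrite <- pow_INR. apply additive_INR_mult. }
  assert (E2 : h (2 ^ k * dyadic_witness x k) = 2 ^ k * h (dyadic_witness x k)).
  { replace 2 with (INR 2) by (simpl; ring). apply Hpow. }
  assert (E8 : h (8 ^ k * x) = 8 ^ k * h x).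
  { replace 8 with (INR 8) by (simpl; ring). apply Hpow. }
  replace (2 ^ k * dyadic_witness x k) with (IZR (up (8 ^ k * x)) + - (8 ^ k * x))
    in E2 by (unfold dyadic_witness; field; lra).
  rewrite h_add, additive_IZR, additive_opp, E8 in E2.
  replace (8 ^ k) with (2 ^ k * 4 ^ k) in E2
    by (rewrite <- Rpow_mult_distr; f_equal; ring).
  apply Rmult_eq_reg_l with (2 ^ k); lra.
Qed.

End Additive.

Lemma is_lim_seq_geom_dominated (t : nat -> R) :
  (forall k, Rabs (t k) <= (/ 2) ^ k) -> is_lim_seq t 0.
Proof.
  intros Ht.
  assert (Hg : is_lim_seq (fun k => (/ 2) ^ k) 0).
  { apply is_lim_seq_geom. rewrite Rabs_pos_eq; lra. }
  apply is_lim_seq_le_le with (u := fun k => - (/ 2) ^ k) (w := fun k => (/ 2) ^ k).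
  - intro k. apply Rabs_le_between, Ht.
  - replace (Finite 0) with (Rbar_opp (Finite 0)) by (simpl; f_equal; ring).
    apply (proj1 (is_lim_seq_opp _ _)), Hg.
  - exact Hg.
Qed.

(* Only the convergence of [sum f(t_k) x^k] at [x = 1/4] is used. *)
Lemma Abel_continuous_geom_dominated_lim (f : R -> R) (t : nat -> R) :
  Abel_continuous f -> (forall k, Rabs (t k) <= (/ 2) ^ k) ->
  is_lim_seq (fun k => f (t k) * (/ 4) ^ k) 0.
Proof.
  intros Hf Ht.
  destruct (Hf _ _ (Abel_convergent_geom_dominated t Ht)) as [Hs _].
  apply ex_series_lim_0, Hs. lra.
Qed.

Lemma Abel_continuous_affine (f : R -> R) :
  Abel_continuous f -> forall x, f x = (f 1 - f 0) * x + f 0.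
Proof.
  intros Hf x.
  set (h := fun y => f y - f 0 - (f 1 - f 0) * y).
  assert (h_add : forall u v, h (u + v) = h u + h v)
    by exact (Jensen_affine_defect_additive f (Abel_continuous_Jensen f Hf)).
  assert (h_1 : h 1 = 0) by (unfold h; ring).
  set (t := dyadic_witness x).
  assert (Ht : forall k, Rabs (t k) <= (/ 2) ^ k) by apply dyadic_witness_bound.
  assert (Hft : forall k, f (t k) * (/ 4) ^ k
                          = - h x + (f 0 + (f 1 - f 0) * t k) * (/ 4) ^ k).
  { intro k.
    replace (f (t k)) with (h (t k) + f 0 + (f 1 - f 0) * t k) by (unfold h; ring).
    unfold t. rewrite (additive_dyadic_witness h h_add h_1).
    replace (- 4 ^ k * h x) with (- h x * 4 ^ k) by ring.
    rewrite !Rmult_plus_distr_r, Rmult_assoc, <- Rpow_mult_distr.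
    replace (4 * / 4) with 1 by field. rewrite pow1. ring. }
  assert (Hlim : is_lim_seq (fun k => f (t k) * (/ 4) ^ k) (- h x)).
  { apply is_lim_seq_ext with (1 := fun k => eq_sym (Hft k)).
    replace (Finite (- h x)) with (Rbar_plus (- h x) ((f 0 + (f 1 - f 0) * 0) * 0))
      by (simpl; f_equal; ring).
    apply is_lim_seq_plus'; [apply is_lim_seq_const|].
    apply is_lim_seq_mult'.
    - apply is_lim_seq_plus'; [apply is_lim_seq_const|].
      apply is_lim_seq_mult'; [apply is_lim_seq_const|].
      apply is_lim_seq_geom_dominated, Ht.
    - apply is_lim_seq_geom. rewrite Rabs_pos_eq; lra. }
  pose proof (is_lim_seq_unique _ _ Hlim) as U1.
  rewrite (is_lim_seq_unique _ _ (Abel_continuous_geom_dominated_lim f t Hf Ht)) in U1.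
  injection U1 as U1. unfold h in U1. lra.
Qed.

Lemma G_continuous_affine (cG : (nat -> R) -> Prop) (G : (nat -> R) -> R)
    (f : R -> R) (a b : R) :
  is_method cG G -> regular cG G -> (forall x, f x = a * x + b) ->
  G_continuous cG G f.
Proof.
  intros [_ [Hplus [Hscal [Gplus Gscal]]]] HR Hf p Hp.
  destruct (HR (fun _ => b) b (is_lim_seq_const _)) as [Hc Gc].
  replace (fun n => f (p n)) with (fun n => (fun n => a * p n) n + (fun _ => b) n)
    by (apply functional_extensionality; intro n; symmetry; apply Hf).
  split.
  - apply Hplus; [apply Hscal, Hp | exact Hc].
  - rewrite Gplus, Gscal, Gc, Hf by (try apply Hscal; assumption). reflexivity.
Qed.

Theorem corollary5 (cG : (nat -> R) -> Prop) (G : (nat -> R) -> R) (f : R -> R) :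
  is_method cG G -> regular cG G -> subsequential cG G ->
  Abel_continuous f -> G_continuous cG G f.
Proof.
  intros HM HR _ Hf.
  exact (G_continuous_affine cG G f (f 1 - f 0) (f 0) HM HR
           (Abel_continuous_affine f Hf)).
Qed.
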